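(* Let $k\ge1$ and let $A_1,\dots,A_n$ be independent events with probabilities $u_i=\mathbf{P}(A_i)\in[0,1]$, where the sequence $u_1,\dots,u_n$ is either nondecreasing or nonincreasing. Then \[ \mathbf{P}\big(\{A_i\}_{i=1}^n\text{ has no }k\text{-gaps}\big)\;\ge\;\prod_{i=1}^n f_k(1-u_i). \]
   Context: For an integer $k\ge1$, $f_k:[0,1]\to[0,1]$ denotes the unique decreasing function satisfying $f_k(x)^k-f_k(x)^{k+1}=x^k-x^{k+1}$ for all $x\in[0,1]$; it is continuous with $f_k(0)=1$, $f_k(1)=0$. A sequence of events $A_1,\dots,A_n$ has a $k$-gap if there is an index $i$ with $i+k-1\le n$ such that none of $A_i,\dots,A_{i+k-1}$ occurs. *)

From Stdlib Require Import Reals Lra List Arith Bool.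
Import ListNotations.
Open Scope R_scope.

(* f is "the" function f_k: a (weakly) decreasing map [0,1] -> [0,1]
   with f(x)^k - f(x)^(k+1) = x^k - x^(k+1) for all x in [0,1].
   (Such f exists and is unique; it satisfies f 0 = 1, f 1 = 0.) *)
Definition is_fk (k : nat) (f : R -> R) : Prop :=
  (forall x, 0 <= x <= 1 -> 0 <= f x <= 1) /\
  (forall x, 0 <= x <= 1 -> f x ^ k - f x ^ (k + 1) = x ^ k - x ^ (k + 1)) /\
  (forall x y, 0 <= x <= 1 -> 0 <= y <= 1 -> x <= y -> f y <= f x).

(* All outcomes (omega_1, ..., omega_n) in {0,1}^n, as boolean lists;
   omega_i = true means that event A_i occurs. *)
Fixpoint bitvecs (n : nat) : list (list bool) :=
  match n with
  | O => [[]]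
  | S m => map (cons true) (bitvecs m) ++ map (cons false) (bitvecs m)
  end.

Definition has_kgapb (k : nat) (w : list bool) : bool :=
  existsb (fun i => andb (i + k <=? length w)%nat (
                    forallb (fun j => negb (nth (i + j) w true)) (seq 0 k)))
          (seq 0 (S (length w))).

(* Probability of the outcome w when the events are independent with
   P(A_i) = u i; the first letter of w corresponds to index i. *)
Fixpoint weight (u : nat -> R) (i : nat) (w : list bool) : R :=
  match w with
  | [] => 1
  | b :: w' => (if b then u i else 1 - u i) * weight u (S i) w'
  end.

Definition prob_no_kgap (k n : nat) (u : nat -> R) : R :=
  fold_right Rplus 0
    (map (fun w => if has_kgapb k w then 0 else weight u 1 w) (bitvecs n)).

Definition prod_1n (n : nat) (g : nat -> R) : R :=
  fold_right Rmult 1 (map g (seq 1 n)).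

From Stdlib Require Import Reals List Arith Lra Lia Bool Permutation.
Import ListNotations.
Open Scope R_scope.

(* Let p_j(m) be the probability that the events A_m, ..., A_n leave no k-gap given that the
   j events just before A_m all failed; then p_j(m) = u_m p_0(m+1) + (1 - u_m) p_(j+1)(m+1),
   with p_j = 0 for j >= k.  Write u_m = 1 / G_(k+1)(r) with G_m(r) = 1 + r + ... + r^(m-1).
   Then f_k(1 - u_m) = G_k(r) / G_(k+1)(r), and psi_j(r) = G_(k-j)(r) / G_k(r) satisfies
   f_k(1 - u_m) psi_j(r) = u_m psi_0(r) + (1 - u_m) psi_(j+1)(r).  When u is nondecreasing
   the parameters r decrease along the sequence while psi_j decreases in r, so backward
   induction gives p_j(m) >= psi_j(r_m) prod_(i >= m) f_k(1 - u_i); at j = 0 this is the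
   claim.  The nonincreasing case follows by reversing the order of the events. *)

(** * k-gaps *)

Definition kgap (k : nat) (w : list bool) : Prop :=
  exists i, (i + k <= length w)%nat /\ forall j, (j < k)%nat -> nth (i + j) w true = false.

Lemma has_kgapbP k w : reflect (kgap k w) (has_kgapb k w).
Proof.
  apply iff_reflect. unfold has_kgapb, kgap. rewrite existsb_exists. split.
  - intros [i [Hi Hw]]. exists i. split; [apply in_seq; lia|].
    apply andb_true_iff; split; [apply Nat.leb_le; lia|].
    apply forallb_forall; intros j Hj; apply in_seq in Hj. now rewrite Hw by lia.
  - intros [i [_ Hb]]. apply andb_true_iff in Hb as [Hlen Hall].
    apply Nat.leb_le in Hlen. rewrite forallb_forall in Hall.
    exists i. split; [exact Hlen|]. intros j Hj.
    apply negb_true_iff, Hall, in_seq. lia.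
Qed.

Lemma kgap_length k w : kgap k w -> (k <= length w)%nat.
Proof. intros [i [Hi _]]. lia. Qed.

Lemma kgap_rev k w : kgap k w -> kgap k (rev w).
Proof.
  intros [i [Hi Hw]]. exists (length w - k - i)%nat. rewrite length_rev. split; [lia|].
  intros j Hj. rewrite rev_nth by lia.
  replace (length w - S (length w - k - i + j))%nat with (i + (k - 1 - j))%nat by lia.
  apply Hw. lia.
Qed.

Lemma has_kgapb_rev k w : has_kgapb k (rev w) = has_kgapb k w.
Proof.
  destruct (has_kgapbP k w) as [Hw|Hw]; destruct (has_kgapbP k (rev w)) as [Hr|Hr]; auto.
  - now apply kgap_rev in Hw.
  - apply kgap_rev in Hr. now rewrite rev_involutive in Hr.
Qed.

Lemma nth_repeat_false_app c w p d :
  nth p (repeat false c ++ w) d = if (p <? c)%nat then false else nth (p - c) w d.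
Proof.
  destruct (Nat.ltb_spec p c).
  - rewrite app_nth1 by (rewrite repeat_length; lia). apply nth_repeat_lt; lia.
  - rewrite app_nth2 by (rewrite repeat_length; lia). now rewrite repeat_length.
Qed.

Lemma kgap_repeat_false_app k c w : (k <= c)%nat -> kgap k (repeat false c ++ w).
Proof.
  intros Hkc. exists 0%nat. rewrite length_app, repeat_length. split; [lia|].
  intros j Hj. rewrite nth_repeat_false_app. destruct (Nat.ltb_spec (0 + j) c); [easy|lia].
Qed.

Lemma kgap_repeat_false_true k c w : (1 <= k)%nat ->
  kgap k (repeat false c ++ true :: w) <-> (k <= c)%nat \/ kgap k w.
Proof.
  intros Hk. split.
  - intros [i [Hi Hw]]. rewrite length_app, repeat_length in Hi. simpl in Hi.
    destruct (le_lt_dec (i + k) c) as [Hin|Hout]; [left; lia|].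
    destruct (le_lt_dec i c) as [Hic|Hci].
    + specialize (Hw (c - i)%nat ltac:(lia)). rewrite nth_repeat_false_app in Hw.
      replace (i + (c - i))%nat with c in Hw by lia.
      now rewrite Nat.ltb_irrefl, Nat.sub_diag in Hw.
    + right. exists (i - c - 1)%nat. split; [lia|].
      intros j Hj. specialize (Hw j Hj). rewrite nth_repeat_false_app in Hw.
      destruct (Nat.ltb_spec (i + j) c); [lia|].
      now replace (i + j - c)%nat with (S (i - c - 1 + j)) in Hw by lia.
  - intros [Hkc|[i [Hi Hw]]]; [now apply kgap_repeat_false_app|].
    exists (c + S i)%nat. rewrite length_app, repeat_length. split; [simpl; lia|].
    intros j Hj. rewrite nth_repeat_false_app.
    destruct (Nat.ltb_spec (c + S i + j) c); [lia|].
    replace (c + S i + j - c)%nat with (S (i + j)) by lia. now apply Hw.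
Qed.

(** * Conditioning on the trailing misses *)

Definition sumR {A} (F : A -> R) (l : list A) : R := fold_right Rplus 0 (map F l).

Lemma sumR_app {A} (F : A -> R) l1 l2 : sumR F (l1 ++ l2) = sumR F l1 + sumR F l2.
Proof. unfold sumR. rewrite map_app, fold_right_app. induction l1; simpl; lra. Qed.

Lemma sumR_map {A B} (F : B -> R) (g : A -> B) l : sumR F (map g l) = sumR (fun x => F (g x)) l.
Proof. unfold sumR. now rewrite map_map. Qed.

Lemma sumR_ext {A} (F G : A -> R) l : (forall x, F x = G x) -> sumR F l = sumR G l.
Proof. intros H. unfold sumR. now rewrite (map_ext F G). Qed.

Lemma sumR_scal {A} (F : A -> R) c l : sumR (fun x => c * F x) l = c * sumR F l.
Proof. unfold sumR. induction l; simpl; [lra|]. rewrite IHl. lra. Qed.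

Lemma sumR_perm {A} (F : A -> R) l l' : Permutation l l' -> sumR F l = sumR F l'.
Proof. intros P. unfold sumR. induction P; simpl; lra. Qed.

(* The p_j(m) of the header, for the n events A_m, ..., A_(m+n-1). *)
Definition prob_no_kgap_after (k : nat) (u : nat -> R) (j m n : nat) : R :=
  sumR (fun w => if has_kgapb k (repeat false j ++ w) then 0 else weight u m w) (bitvecs n).

Lemma prob_no_kgap_after_ge k u j m n : (k <= j)%nat -> prob_no_kgap_after k u j m n = 0.
Proof.
  intros Hkj. unfold prob_no_kgap_after, sumR. induction (bitvecs n) as [|w ws IH]; [easy|].
  simpl. destruct (has_kgapbP k (repeat false j ++ w)) as [_|Hw].
  - rewrite IH. lra.
  - now destruct (Hw (kgap_repeat_false_app k j w Hkj)).
Qed.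

Lemma prob_no_kgap_after_0 k u j m : (j < k)%nat -> prob_no_kgap_after k u j m 0 = 1.
Proof.
  intros Hjk. unfold prob_no_kgap_after, sumR. simpl.
  destruct (has_kgapbP k (repeat false j ++ [])) as [Hw|_]; [|lra].
  apply kgap_length in Hw. rewrite length_app, repeat_length in Hw. simpl in Hw. lia.
Qed.

Lemma prob_no_kgap_after_S k u j m n : (1 <= k)%nat -> (j < k)%nat ->
  prob_no_kgap_after k u j m (S n) =
  u m * prob_no_kgap_after k u 0 (S m) n + (1 - u m) * prob_no_kgap_after k u (S j) (S m) n.
Proof.
  intros Hk Hjk. unfold prob_no_kgap_after. simpl bitvecs.
  rewrite sumR_app, !sumR_map, <- !sumR_scal. f_equal; apply sumR_ext; intros w; simpl weight.
  - destruct (has_kgapbP k (repeat false j ++ true :: w)) as [Hg|Hg];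
      destruct (has_kgapbP k (repeat false 0 ++ w)) as [Hg'|Hg']; simpl in *; try lra.
    + apply (kgap_repeat_false_true k j w Hk) in Hg as [Hkj|Hw]; [lia|easy].
    + destruct Hg. apply kgap_repeat_false_true; auto.
  - replace (repeat false j ++ false :: w) with (repeat false (S j) ++ w)
      by (rewrite <- Nat.add_1_r, repeat_app, <- app_assoc; reflexivity).
    destruct (has_kgapb k (repeat false (S j) ++ w)); lra.
Qed.

Lemma prob_no_kgap_after_nonneg k u j m n : (1 <= k)%nat ->
  (forall i, (m <= i < m + n)%nat -> 0 <= u i <= 1) -> 0 <= prob_no_kgap_after k u j m n.
Proof.
  intros Hk. revert j m. induction n as [|n IH]; intros j m Hu.
  - destruct (le_lt_dec k j).
    + rewrite prob_no_kgap_after_ge by lia. lra.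
    + rewrite prob_no_kgap_after_0 by lia. lra.
  - destruct (le_lt_dec k j); [rewrite prob_no_kgap_after_ge by lia; lra|].
    rewrite prob_no_kgap_after_S by lia.
    pose proof (Hu m ltac:(lia)).
    assert (Hu' : forall i, (S m <= i < S m + n)%nat -> 0 <= u i <= 1) by (intros; apply Hu; lia).
    pose proof (IH 0%nat (S m) Hu'). pose proof (IH (S j) (S m) Hu'). nra.
Qed.

Lemma prob_no_kgap_after_S_ge k u j m r P c a b : (1 <= k)%nat -> (j < k)%nat ->
  0 <= u m <= 1 -> 0 <= P ->
  prob_no_kgap_after k u 0 (S m) r >= P -> prob_no_kgap_after k u (S j) (S m) r >= P * b ->
  c * a = u m + (1 - u m) * b ->
  prob_no_kgap_after k u j m (S r) >= c * P * a.
Proof.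
  intros Hk Hjk Hu HP H0 Hb Hca. rewrite prob_no_kgap_after_S by auto.
  replace (c * P * a) with (u m * P + (1 - u m) * (P * b))
    by (rewrite (Rmult_comm c P), Rmult_assoc, Hca; ring).
  assert (u m * prob_no_kgap_after k u 0 (S m) r >= u m * P) by nra.
  assert ((1 - u m) * prob_no_kgap_after k u (S j) (S m) r >= (1 - u m) * (P * b)) by nra.
  lra.
Qed.

(** * Geometric sums *)

Fixpoint geom (m : nat) (r : R) : R :=
  match m with O => 0 | S m' => 1 + r * geom m' r end.

Lemma geom_nonneg m r : 0 <= r -> 0 <= geom m r.
Proof. intros Hr. induction m; simpl; nra. Qed.

Lemma geom_ge1 m r : 0 <= r -> (1 <= m)%nat -> 1 <= geom m r.
Proof. intros Hr Hm. destruct m; [lia|]. simpl. pose proof (geom_nonneg m r Hr). nra. Qed.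

Lemma geom_add m p r : geom (m + p) r = geom m r + r ^ m * geom p r.
Proof. induction m; simpl; [lra|]. rewrite IHm. ring. Qed.

Lemma geom_le m a b : 0 <= a <= b -> geom m a <= geom m b.
Proof. intros Hab. induction m; simpl; [lra|]. pose proof (geom_nonneg m a ltac:(lra)). nra. Qed.

Lemma geom_lt m a b : (2 <= m)%nat -> 0 <= a < b -> geom m a < geom m b.
Proof.
  intros Hm Hab. destruct m as [|m]; [lia|]. simpl.
  pose proof (geom_le m a b ltac:(lra)). pose proof (geom_ge1 m b ltac:(lra) ltac:(lia)).
  pose proof (geom_nonneg m a ltac:(lra)). nra.
Qed.

Lemma geom_cross m a b : 0 <= a <= b -> geom m b * a ^ m <= geom m a * b ^ m.
Proof.
  intros Hab. induction m; simpl; [lra|].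
  pose proof (geom_nonneg m a ltac:(lra)). pose proof (geom_nonneg m b ltac:(lra)).
  assert (a ^ m <= b ^ m) by (apply pow_incr; lra).
  assert (0 <= a ^ m) by (apply pow_le; lra).
  assert (a * b * (geom m b * a ^ m) <= a * b * (geom m a * b ^ m))
    by (apply Rmult_le_compat_l; nra).
  nra.
Qed.

Lemma geom_bounds_le1 m r : 0 <= r <= 1 -> INR m * r ^ m <= geom m r <= INR m.
Proof.
  intros Hr. induction m as [|m IH]; [simpl; lra|]. rewrite S_INR. cbn [geom pow].
  assert (r ^ m <= 1) by (rewrite <- (pow1 m); apply pow_incr; lra).
  assert (0 <= r ^ m) by (apply pow_le; lra).
  pose proof (pos_INR m). nra.
Qed.

Lemma geom_bounds_ge1 m r : 1 <= r -> INR m <= geom m r <= INR m * r ^ m.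
Proof.
  intros Hr. induction m as [|m IH]; [simpl; lra|]. rewrite S_INR. cbn [geom pow].
  assert (1 <= r ^ m) by (apply pow_R1_Rle; lra).
  pose proof (pos_INR m). nra.
Qed.

Lemma geom_continuous m : continuity (geom m).
Proof.
  induction m as [|m IH].
  - change (geom 0) with (fct_cte 0). now apply continuity_const.
  - change (geom (S m)) with (plus_fct (fct_cte 1) (mult_fct id (geom m))).
    apply continuity_plus; [now apply continuity_const|].
    apply continuity_mult; [apply derivable_continuous, derivable_id|exact IH].
Qed.

Lemma geom_root_exists m x : (2 <= m)%nat -> 0 < x <= 1 -> exists r, 0 <= r /\ x * geom m r = 1.
Proof.
  intros Hm Hx.
  assert (Hc : continuity (fun r => x * geom m r - 1)).
  { apply continuity_minus; [apply continuity_scal, geom_continuous|now apply continuity_const]. }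
  assert (Hinv : 0 < / x) by (apply Rinv_0_lt_compat; lra).
  destruct (IVT_cor _ 0 (/ x) Hc ltac:(lra)) as [r [Hr E]]; [|exists r; split; lra].
  destruct m as [|m]; [lia|]. simpl geom.
  pose proof (geom_ge1 m (/ x) ltac:(lra) ltac:(lia)).
  replace (x * (1 + / x * geom m (/ x)) - 1) with (x + geom m (/ x) - 1) by (field; lra).
  nra.
Qed.

Lemma geom_root_le m x s t : (2 <= m)%nat -> 0 <= s -> 0 <= t ->
  x * geom m t = 1 -> 1 <= x * geom m s -> t <= s.
Proof.
  intros Hm Hs Ht Et Es. destruct (Rle_lt_dec t s) as [|Hst]; [easy|].
  pose proof (geom_lt m s t Hm ltac:(lra)). pose proof (geom_ge1 m s Hs ltac:(lia)).
  assert (0 < x) by (destruct (Rle_lt_dec x 0); [nra|easy]).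
  nra.
Qed.

Definition geom_ratio (k j : nat) (r : R) : R := geom (k - j) r / geom k r.

Section GeomRatio.
Variables (k : nat) (r : R).
Hypotheses (Hk : (1 <= k)%nat) (Hr : 0 <= r).

Lemma geom_ratio_bounds j : 0 <= geom_ratio k j r <= 1.
Proof.
  unfold geom_ratio. pose proof (geom_ge1 k r Hr Hk).
  pose proof (geom_nonneg (k - j) r Hr).
  assert (geom (k - j) r <= geom k r).
  { destruct (le_lt_dec j k).
    - replace k with (k - j + j)%nat at 2 by lia. rewrite geom_add.
      pose proof (geom_nonneg j r Hr). assert (0 <= r ^ (k - j)) by (apply pow_le; lra). nra.
    - replace (k - j)%nat with 0%nat by lia. simpl. lra. }
  unfold Rdiv. split.
  - apply Rmult_le_pos; [lra|left; apply Rinv_0_lt_compat; lra].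
  - apply Rmult_le_reg_r with (geom k r); [lra|]. rewrite Rmult_assoc, Rinv_l by lra. lra.
Qed.

Lemma geom_ratio_0 : geom_ratio k 0 r = 1.
Proof. unfold geom_ratio. rewrite Nat.sub_0_r. pose proof (geom_ge1 k r Hr Hk). field. lra. Qed.

Lemma geom_ratio_step j : (j < k)%nat ->
  geom k r / geom (S k) r * geom_ratio k j r =
  1 / geom (S k) r + (1 - 1 / geom (S k) r) * geom_ratio k (S j) r.
Proof.
  intros Hjk. unfold geom_ratio. pose proof (geom_ge1 k r Hr Hk).
  replace (k - j)%nat with (S (k - S j)) by lia. simpl geom.
  pose proof (geom_nonneg k r Hr). field. nra.
Qed.

End GeomRatio.

Lemma geom_ratio_ge k j r : (k <= j)%nat -> geom_ratio k j r = 0.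
Proof. intros. unfold geom_ratio. replace (k - j)%nat with 0%nat by lia. simpl. lra. Qed.

Lemma geom_ratio_antitone k j a b : (1 <= k)%nat -> 0 <= a <= b ->
  geom_ratio k j b <= geom_ratio k j a.
Proof.
  intros Hk Hab. destruct (le_lt_dec k j) as [Hkj|Hjk].
  { rewrite !geom_ratio_ge by lia. lra. }
  unfold geom_ratio. set (m := (k - j)%nat).
  pose proof (geom_ge1 k a ltac:(lra) Hk). pose proof (geom_ge1 k b ltac:(lra) Hk).
  apply Rmult_le_reg_r with (geom k a * geom k b); [nra|].
  replace (geom m b / geom k b * (geom k a * geom k b)) with (geom m b * geom k a) by (field; lra).
  replace (geom m a / geom k a * (geom k a * geom k b)) with (geom m a * geom k b) by (field; lra).
  replace k with (m + (k - m))%nat by lia. rewrite !geom_add.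
  pose proof (geom_cross m a b Hab). pose proof (geom_le (k - m) a b Hab).
  pose proof (geom_nonneg (k - m) a ltac:(lra)). pose proof (geom_nonneg m a ltac:(lra)).
  pose proof (geom_nonneg m b ltac:(lra)).
  assert (0 <= a ^ m) by (apply pow_le; lra). assert (0 <= b ^ m) by (apply pow_le; lra).
  assert (geom m b * a ^ m * geom (k - m) a <= geom m a * b ^ m * geom (k - m) b).
  { apply Rle_trans with (geom m a * b ^ m * geom (k - m) a); apply Rmult_le_compat; nra. }
  nra.
Qed.

(** * The function f_k *)

Definition hk (k : nat) (t : R) : R := t ^ k - t ^ (k + 1).

Definition crit (k : nat) : R := INR k / INR (S k).

Lemma hk_factor k t : hk k t = t ^ k * (1 - t).
Proof. unfold hk. rewrite pow_add. ring. Qed.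

Lemma crit_eq k : crit k = INR k / (INR k + 1).
Proof. unfold crit. now rewrite S_INR. Qed.

Lemma crit_bounds k : (1 <= k)%nat -> 0 < crit k < 1.
Proof.
  intros Hk. rewrite crit_eq. assert (1 <= INR k) by (apply (le_INR 1); lia).
  split; [apply Rdiv_lt_0_compat; lra|]. apply Rmult_lt_reg_r with (INR k + 1); [lra|].
  field_simplify; lra.
Qed.

Lemma hk_derivative k t : (1 <= k)%nat ->
  derivable_pt_lim (hk k) t (t ^ pred k * (INR (S k) * (crit k - t))).
Proof.
  intros Hk. replace (t ^ pred k * (INR (S k) * (crit k - t)))
    with (INR k * t ^ pred k - INR (k + 1) * t ^ pred (k + 1)).
  - apply derivable_pt_lim_minus; apply derivable_pt_lim_pow.
  - unfold crit. destruct k as [|k]; [lia|].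
    replace (pred (S k + 1)) with (S k) by lia. rewrite Nat.add_1_r. simpl pred.
    cbn [pow]. field. rewrite S_INR. pose proof (pos_INR (S k)). lra.
Qed.

Section Unimodal.
Variable k : nat.
Hypothesis Hk : (1 <= k)%nat.

Lemma hk_increasing a b : 0 <= a -> a < b -> b <= crit k -> hk k a < hk k b.
Proof.
  intros Ha Hab Hb.
  destruct (MVT_cor2 (hk k) _ a b Hab (fun c _ => hk_derivative k c Hk)) as [c [E Hc]].
  assert (0 < c ^ pred k) by (apply pow_lt; lra).
  assert (0 < INR (S k)) by (apply lt_0_INR; lia).
  assert (0 < c ^ pred k * (INR (S k) * (crit k - c)) * (b - a)).
  { repeat apply Rmult_lt_0_compat; lra. }
  lra.
Qed.

Lemma hk_decreasing a b : crit k <= a -> a < b -> b <= 1 -> hk k b < hk k a.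
Proof.
  intros Ha Hab Hb. pose proof (crit_bounds k Hk).
  destruct (MVT_cor2 (hk k) _ a b Hab (fun c _ => hk_derivative k c Hk)) as [c [E Hc]].
  assert (0 < c ^ pred k) by (apply pow_lt; lra).
  assert (0 < INR (S k)) by (apply lt_0_INR; lia).
  assert (0 < c ^ pred k * (INR (S k) * (c - crit k)) * (b - a)).
  { repeat apply Rmult_lt_0_compat; lra. }
  lra.
Qed.

Lemma hk_inj_left a b : 0 <= a <= crit k -> 0 <= b <= crit k -> hk k a = hk k b -> a = b.
Proof.
  intros Ha Hb E. destruct (Rtotal_order a b) as [H|[H|H]]; auto.
  - pose proof (hk_increasing a b ltac:(lra) H ltac:(lra)). lra.
  - pose proof (hk_increasing b a ltac:(lra) H ltac:(lra)). lra.
Qed.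

Lemma hk_inj_right a b : crit k <= a <= 1 -> crit k <= b <= 1 -> hk k a = hk k b -> a = b.
Proof.
  intros Ha Hb E. destruct (Rtotal_order a b) as [H|[H|H]]; auto.
  - pose proof (hk_decreasing a b ltac:(lra) H ltac:(lra)). lra.
  - pose proof (hk_decreasing b a ltac:(lra) H ltac:(lra)). lra.
Qed.

Section Fk.
Variable f : R -> R.
Hypothesis Hf : is_fk k f.

Lemma is_fk_hk x : 0 <= x <= 1 -> hk k (f x) = hk k x.
Proof. intros Hx. apply (proj1 (proj2 Hf)), Hx. Qed.

Lemma is_fk_crit : f (crit k) = crit k.
Proof.
  destruct Hf as [Hrange _]. pose proof (crit_bounds k Hk).
  pose proof (Hrange (crit k) ltac:(lra)). pose proof (is_fk_hk (crit k) ltac:(lra)).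
  destruct (Rle_lt_dec (f (crit k)) (crit k)).
  - apply hk_inj_left; lra.
  - apply hk_inj_right; lra.
Qed.

Lemma is_fk_1 : f 1 = 0.
Proof.
  destruct Hf as [Hrange [_ Hdec]]. pose proof (crit_bounds k Hk).
  pose proof (Hrange 1 ltac:(lra)) as H1.
  pose proof (Hdec (crit k) 1 ltac:(lra) ltac:(lra) ltac:(lra)) as Hle.
  rewrite is_fk_crit in Hle.
  pose proof (is_fk_hk 1 ltac:(lra)) as E. rewrite !hk_factor, Rminus_diag, Rmult_0_r in E.
  apply Rmult_integral in E as [E|E]; [|lra].
  destruct (Req_dec (f 1) 0) as [|Hne]; [easy|]. now destruct (pow_nonzero _ k Hne).
Qed.

(* q := 1 - 1 / geom (S k) r and l := geom k r / geom (S k) r satisfy q = r l and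
   hk q = hk l, and lie on opposite sides of crit k, the maximum of hk. *)
Lemma is_fk_geom r : 0 <= r -> f (1 - 1 / geom (S k) r) = geom k r / geom (S k) r.
Proof.
  intros Hr. destruct Hf as [Hrange [_ Hdec]]. pose proof (crit_bounds k Hk).
  pose proof (geom_ge1 k r Hr Hk). pose proof (geom_nonneg k r Hr).
  assert (0 <= r ^ k) by (apply pow_le; lra).
  assert (ES : geom (S k) r = geom k r + r ^ k)
    by (rewrite <- Nat.add_1_r, geom_add; simpl; ring).
  set (G := geom (S k) r) in *. set (g := geom k r) in *.
  assert (EG : G = 1 + r * g) by reflexivity.
  set (q := 1 - 1 / G). set (l := g / G).
  assert (Hq : 0 <= q <= 1).
  { unfold q. split; apply Rmult_le_reg_r with G; try lra; field_simplify; nra. }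
  assert (Hl : 0 <= l <= 1).
  { unfold l. split; apply Rmult_le_reg_r with G; try lra; field_simplify; lra. }
  assert (Hh : hk k q = hk k l).
  { rewrite !hk_factor.
    replace q with (r * l) at 1 by (unfold q, l; rewrite EG; field; lra).
    rewrite Rpow_mult_distr. unfold q, l. rewrite ES. field. lra. }
  pose proof (Hrange q Hq). rewrite <- (is_fk_hk q Hq) in Hh.
  assert (1 <= INR k) by (apply (le_INR 1); lia).
  pose proof is_fk_crit as Hc.
  destruct (Rle_dec r 1) as [Hr1|Hr1].
  - pose proof (geom_bounds_le1 k r ltac:(lra)) as Hb. fold g in Hb.
    assert (r * g <= g) by nra.
    assert (q <= crit k).
    { unfold q. rewrite crit_eq. apply Rmult_le_reg_r with (G * (INR k + 1)); [nra|].
      field_simplify; nra. }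
    assert (crit k <= l).
    { unfold l. rewrite crit_eq. apply Rmult_le_reg_r with (G * (INR k + 1)); [nra|].
      field_simplify; nra. }
    pose proof (Hdec q (crit k) Hq ltac:(lra) ltac:(lra)).
    apply hk_inj_right; lra.
  - pose proof (geom_bounds_ge1 k r ltac:(lra)) as Hb. fold g in Hb.
    assert (g <= r * g) by nra.
    assert (crit k <= q).
    { unfold q. rewrite crit_eq. apply Rmult_le_reg_r with (G * (INR k + 1)); [nra|].
      field_simplify; nra. }
    assert (l <= crit k).
    { unfold l. rewrite crit_eq. apply Rmult_le_reg_r with (G * (INR k + 1)); [nra|].
      field_simplify; nra. }
    pose proof (Hdec (crit k) q ltac:(lra) Hq ltac:(lra)).
    apply hk_inj_left; lra.
Qed.

End Fk.
End Unimodal.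

(** * Nondecreasing probabilities *)

Definition prod_from (F : nat -> R) (m r : nat) : R := fold_right Rmult 1 (map F (seq m r)).

Lemma prod_from_nonneg F m r : (forall i, (m <= i < m + r)%nat -> 0 <= F i) -> 0 <= prod_from F m r.
Proof.
  revert m. induction r as [|r IH]; intros m HF; unfold prod_from; simpl; [lra|].
  apply Rmult_le_pos; [apply HF; lia|apply IH; intros; apply HF; lia].
Qed.

Lemma is_fk_ratio_step k f x t j : (1 <= k)%nat -> is_fk k f -> 0 <= t ->
  x * geom (S k) t = 1 -> (j < k)%nat ->
  f (1 - x) * geom_ratio k j t = x + (1 - x) * geom_ratio k (S j) t.
Proof.
  intros Hk Hf Ht Hx Hjk. pose proof (geom_ge1 (S k) t Ht ltac:(lia)).
  replace x with (1 / geom (S k) t) by (rewrite <- Hx; field; lra).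
  rewrite is_fk_geom by auto. now apply geom_ratio_step.
Qed.

Section Nondecreasing.
Variables (k n : nat) (f : R -> R) (u : nat -> R).
Hypotheses (Hk : (1 <= k)%nat) (Hf : is_fk k f)
  (Hu : forall i, (1 <= i <= n)%nat -> 0 <= u i <= 1)
  (Hmono : forall i j, (1 <= i)%nat -> (i <= j)%nat -> (j <= n)%nat -> u i <= u j).

Let F i := f (1 - u i).

Lemma F_nonneg i : (1 <= i <= n)%nat -> 0 <= F i.
Proof. intros Hi. pose proof (Hu i Hi). apply (proj1 Hf). lra. Qed.

Lemma prob_no_kgap_after_ge_prod r : forall m s j, (m + r = S n)%nat -> (1 <= m)%nat -> 0 <= s ->
  ((0 < r)%nat -> 1 <= u m * geom (S k) s) ->
  prob_no_kgap_after k u j m r >= prod_from F m r * geom_ratio k j s.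
Proof.
  induction r as [|r IH]; intros m s j Hmr Hm Hs Hus.
  - unfold prod_from; simpl. rewrite Rmult_1_l. destruct (le_lt_dec k j).
    + rewrite prob_no_kgap_after_ge, geom_ratio_ge by lia. lra.
    + rewrite prob_no_kgap_after_0 by lia. pose proof (geom_ratio_bounds k s Hk Hs j). lra.
  - specialize (Hus ltac:(lia)). pose proof (Hu m ltac:(lia)) as Hum.
    pose proof (geom_ge1 (S k) s Hs ltac:(lia)).
    assert (Hpos : 0 < u m) by (destruct (Rle_lt_dec (u m) 0); [nra|easy]).
    destruct (geom_root_exists (S k) (u m) ltac:(lia) ltac:(lra)) as [t [Ht Hroot]].
    pose proof (geom_root_le (S k) (u m) s t ltac:(lia) Hs Ht Hroot Hus) as Hts.
    assert (HP : 0 <= prod_from F m (S r))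
      by (apply prod_from_nonneg; intros; apply F_nonneg; lia).
    pose proof (geom_ratio_antitone k j t s Hk ltac:(lra)).
    enough (prob_no_kgap_after k u j m (S r) >= prod_from F m (S r) * geom_ratio k j t) by nra.
    destruct (le_lt_dec k j).
    { rewrite prob_no_kgap_after_ge, geom_ratio_ge by lia. lra. }
    assert (Hnext : (0 < r)%nat -> 1 <= u (S m) * geom (S k) t).
    { intros. pose proof (Hmono m (S m) Hm ltac:(lia) ltac:(lia)).
      pose proof (geom_ge1 (S k) t Ht ltac:(lia)). nra. }
    pose proof (IH (S m) t 0%nat ltac:(lia) ltac:(lia) Ht Hnext) as I0.
    pose proof (IH (S m) t (S j) ltac:(lia) ltac:(lia) Ht Hnext) as I1.
    rewrite geom_ratio_0, Rmult_1_r in I0 by auto.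
    change (prod_from F m (S r)) with (F m * prod_from F (S m) r).
    apply prob_no_kgap_after_S_ge with (b := geom_ratio k (S j) t); auto.
    + apply prod_from_nonneg; intros; apply F_nonneg; lia.
    + unfold F. now apply is_fk_ratio_step.
Qed.

Lemma prob_no_kgap_ge_prod_nondecreasing : prob_no_kgap k n u >= prod_1n n F.
Proof.
  change (prob_no_kgap k n u) with (prob_no_kgap_after k u 0 1 n).
  change (prod_1n n F) with (prod_from F 1 n).
  destruct (Nat.eq_dec n 0) as [Hn|Hn].
  { pose proof (prob_no_kgap_after_ge_prod 0 1 0 0 ltac:(lia) ltac:(lia) ltac:(lra) ltac:(lia)) as H.
    rewrite Hn. now rewrite geom_ratio_0, Rmult_1_r in H by (auto; lra). }
  pose proof (Hu 1%nat ltac:(lia)) as Hu1. destruct (Rle_lt_dec (u 1%nat) 0) as [Hz|Hpos].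
  - (* No parameter exists for u 1 = 0, but then the first factor f 1 vanishes. *)
    replace (prod_from F 1 n) with (F 1%nat * prod_from F 2 (n - 1))
      by (destruct n; [lia|now rewrite Nat.sub_1_r]).
    unfold F at 1. replace (u 1%nat) with 0 by lra.
    rewrite Rminus_0_r, (is_fk_1 k Hk f Hf), Rmult_0_l.
    apply Rle_ge, prob_no_kgap_after_nonneg; [easy|]. intros; apply Hu; lia.
  - destruct (geom_root_exists (S k) (u 1%nat) ltac:(lia) ltac:(lra)) as [t [Ht Hroot]].
    pose proof (prob_no_kgap_after_ge_prod n 1 t 0 ltac:(lia) ltac:(lia) Ht ltac:(lra)) as H.
    now rewrite geom_ratio_0, Rmult_1_r in H.
Qed.

End Nondecreasing.

(** * Reversing the order of the events *)

Lemma length_in_bitvecs n w : In w (bitvecs n) -> length w = n.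
Proof.
  revert w; induction n as [|n IH]; simpl; intros w Hw.
  - now destruct Hw as [<-|[]].
  - apply in_app_or in Hw as [Hw|Hw]; apply in_map_iff in Hw as [w' [<- Hw']]; simpl; auto.
Qed.

Lemma in_bitvecs n w : length w = n -> In w (bitvecs n).
Proof.
  revert w; induction n as [|n IH]; simpl; intros w Hw.
  - destruct w; [now left|discriminate].
  - destruct w as [|b w]; [discriminate|]. apply in_or_app.
    destruct b; [left|right]; apply in_map, IH; simpl in Hw; lia.
Qed.

Lemma NoDup_bitvecs n : NoDup (bitvecs n).
Proof.
  induction n as [|n IH]; simpl.
  - repeat constructor. easy.
  - apply NoDup_app; try (apply FinFun.Injective_map_NoDup; [intros x y E; now injection E|easy]).
    intros w Ht Hf. apply in_map_iff in Ht as [x [<- _]]. apply in_map_iff in Hf as [y [E _]].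
    discriminate.
Qed.

Lemma Permutation_bitvecs_rev n : Permutation (bitvecs n) (map (@rev bool) (bitvecs n)).
Proof.
  apply NoDup_Permutation; [apply NoDup_bitvecs| |].
  - apply FinFun.Injective_map_NoDup; [|apply NoDup_bitvecs].
    intros x y E. now rewrite <- (rev_involutive x), E, rev_involutive.
  - intros w. rewrite in_map_iff. split.
    + intros Hw. exists (rev w). rewrite rev_involutive. split; [easy|].
      apply in_bitvecs. rewrite length_rev. now apply length_in_bitvecs.
    + intros [w' [<- Hw']]. apply in_bitvecs. rewrite length_rev. now apply length_in_bitvecs.
Qed.

Lemma weight_app u m w1 w2 : weight u m (w1 ++ w2) = weight u m w1 * weight u (m + length w1) w2.
Proof.
  revert m; induction w1 as [|b w1 IH]; intros m; simpl.
  - rewrite Nat.add_0_r. ring.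
  - rewrite IH. replace (m + S (length w1))%nat with (S m + length w1)%nat by lia. ring.
Qed.

Lemma weight_rev u n w a : (1 <= a)%nat -> (a + length w <= S n)%nat ->
  weight (fun i => u (S n - i)%nat) a w = weight u (S (S n) - a - length w) (rev w).
Proof.
  revert a; induction w as [|b w IH]; intros a Ha Hlen; [reflexivity|].
  cbn [weight rev length] in *.
  rewrite weight_app, (IH (S a)) by lia. rewrite length_rev. cbn [weight].
  replace (S (S n) - a - S (length w) + length w)%nat with (S n - a)%nat by lia.
  replace (S (S n) - S a - length w)%nat with (S (S n) - a - S (length w))%nat by lia.
  ring.
Qed.

Lemma prob_no_kgap_rev k n u : prob_no_kgap k n (fun i => u (S n - i)%nat) = prob_no_kgap k n u.
Proof.
  unfold prob_no_kgap.
  fold (sumR (fun w => if has_kgapb k w then 0 else weight u 1 w) (bitvecs n)).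
  fold (sumR (fun w => if has_kgapb k w then 0 else weight (fun i => u (S n - i)%nat) 1 w)
          (bitvecs n)).
  rewrite (sumR_perm _ _ _ (Permutation_bitvecs_rev n)), sumR_map.
  unfold sumR. f_equal. apply map_ext_in. intros w Hw.
  rewrite has_kgapb_rev. destruct (has_kgapb k w); [reflexivity|].
  pose proof (length_in_bitvecs n w Hw) as Hlen.
  rewrite (weight_rev u n (rev w) 1) by (rewrite ?length_rev; lia).
  rewrite rev_involutive, length_rev, Hlen. f_equal. lia.
Qed.

Lemma rev_seq_1 n : rev (seq 1 n) = map (fun i => S n - i)%nat (seq 1 n).
Proof.
  induction n as [|n IH]; [reflexivity|].
  change (map (fun i => S (S n) - i)%nat (seq 1 (S n)))
    with (S n :: map (fun i => S (S n) - i)%nat (seq 2 n)).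
  rewrite seq_S, rev_app_distr, IH. cbn [rev app]. f_equal.
  rewrite <- (seq_shift n 1), map_map. apply map_ext. intros. lia.
Qed.

Lemma prod_perm l l' : Permutation l l' -> fold_right Rmult 1 l = fold_right Rmult 1 l'.
Proof. intros P. induction P; simpl; [reflexivity|now rewrite IHP|ring|congruence]. Qed.

Lemma prod_1n_rev n g : prod_1n n (fun i => g (S n - i)%nat) = prod_1n n g.
Proof.
  unfold prod_1n. rewrite <- (map_map (fun i => S n - i)%nat g), <- rev_seq_1, map_rev.
  symmetry. apply prod_perm, Permutation_rev.
Qed.

Theorem mainTheorem3 (k n : nat) (f : R -> R) (u : nat -> R) :
  (1 <= k)%nat ->
  is_fk k f ->
  (forall i, (1 <= i <= n)%nat -> 0 <= u i <= 1) ->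
  ((forall i j, (1 <= i)%nat -> (i <= j)%nat -> (j <= n)%nat -> u i <= u j) \/
   (forall i j, (1 <= i)%nat -> (i <= j)%nat -> (j <= n)%nat -> u j <= u i)) ->
  prob_no_kgap k n u >= prod_1n n (fun i => f (1 - u i)).
Proof.
  intros Hk Hf Hu [Hinc|Hdec].
  - now apply prob_no_kgap_ge_prod_nondecreasing.
  - rewrite <- prob_no_kgap_rev, <- (prod_1n_rev n (fun i => f (1 - u i))).
    apply (prob_no_kgap_ge_prod_nondecreasing k n f (fun i => u (S n - i)%nat) Hk Hf).
    + intros i Hi. apply Hu. lia.
    + intros i j Hi Hij Hj. apply Hdec; lia.
Qed.
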